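(* Let $\Omega$ be a classical Cartan domain of rank $r$ (setup below). Then its Shilov boundary is \[S_\Omega=\Big\{z\in\mathbb C^d:\ \Delta^{(\ell)}(z,z)=\binom{r}{\ell}\ \text{ for all } 1\le \ell\le r\Big\}.\]
   Context: Let $\Omega\subset\mathbb C^d$ be a classical (irreducible) Cartan domain of rank $r$ in its Harish-Chandra realization, viewed as the open unit ball of a Cartan factor $Z\cong\mathbb C^d$. Let $G$ be the identity component of $\mathrm{Aut}(\Omega)$ and $\mathbb K=\{g\in G: g(0)=0\}$; $\mathbb K$ consists of linear maps and so acts on all of $\mathbb C^d$. There is a Jordan frame $e_1,\dots,e_r$ (pairwise orthogonal minimal tripotents) such that every $z\in\mathbb C^d$ has a polar decomposition $z=k\cdot\sum_{j=1}^r t_je_j$ with $k\in\mathbb K$ and uniquely determined singular numbers $t_1\ge\dots\ge t_r\ge 0$; the spectral norm is $\|z\|=t_1$ and $\Omega=\{z:\|z\|<1\}$. The Shilov boundary of $\Omega$ is $S_\Omega=\{k\cdot e: k\in\mathbb K\}$ where $e=e_1+\dots+e_r$. The Jordan triple determinant $\Delta(z,w)$ is the unique $\mathbb K$-invariant sesqui-analytic polynomial (holomorphic in $z$, antiholomorphic in $w$) with $\Delta(z,z)=\prod_{j=1}^r(1-t_j^2)$. Write $\Delta(z,w)=\sum_{\ell=0}^r(-1)^\ell\Delta^{(\ell)}(z,w)$, where $\Delta^{(\ell)}$ is a sesqui-analytic polynomial homogeneous of bidegree $(\ell,\ell)$ (and $\Delta^{(0)}=1$). *)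

From HB Require Import structures.
From mathcomp Require Import all_boot all_order all_algebra.
From mathcomp Require Import Rstruct.
From mathcomp Require Import complex.
From mathcomp Require Import mpoly.

Set Implicit Arguments.
Unset Strict Implicit.
Unset Printing Implicit Defensive.

Import Order.TTheory GRing.Theory Num.Theory.
Local Open Scope ring_scope.
Local Open Scope complex_scope.

Notation Re_t := Rdefinitions.R.
Definition CC : numClosedFieldType := Rdefinitions.R[i].

(* Points of C^d are row vectors 'rV[CC]_d; an element k of K (a linear map
   of C^d) is a d x d matrix acting by z |-> z *m k. *)

Definition frame_point (d r : nat) (e : 'I_r -> 'rV[CC]_d) (t : 'I_r -> Re_t)
  : 'rV[CC]_d := \sum_(j < r) ((t j)%:C : CC) *: e j.

Definition sing_seq (r : nat) (t : 'I_r -> Re_t) : Prop :=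
  (forall i, 0 <= t i) /\ (forall i j : 'I_r, (i <= j)%N -> t j <= t i).

Definition polar (d r : nat) (K : pred 'M[CC]_d) (e : 'I_r -> 'rV[CC]_d)
    (z : 'rV[CC]_d) (t : 'I_r -> Re_t) : Prop :=
  sing_seq t /\ exists2 k, k \in K & z = frame_point e t *m k.

(* Sesqui-analytic polynomials on C^d x C^d: polynomials in the 2d variables
   (z_1, ..., z_d, conj w_1, ..., conj w_d), i.e. elements of {mpoly CC[d+d]};
   the first d variables stand for z, the last d for conj w. *)
Definition sesq_eval (d : nat) (P : {mpoly CC[d + d]}) (z w : 'rV[CC]_d) : CC :=
  P.@[fun i : 'I_(d + d) =>
        match split i with inl a => z 0 a | inr b => (w 0 b)^* end].

Definition degz (d : nat) (m : 'X_{1.. d + d}) : nat :=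
  (\sum_(i < d) m (lshift d i))%N.
Definition degw (d : nat) (m : 'X_{1.. d + d}) : nat :=
  (\sum_(i < d) m (rshift d i))%N.

Definition bicomp (d : nat) (P : {mpoly CC[d + d]}) (a b : nat)
  : {mpoly CC[d + d]} :=
  \sum_(m <- msupp P | (degz m == a) && (degw m == b)) P@_m *: 'X_[m].

(* Delta^(l), defined by  Delta = \sum_l (-1)^l Delta^(l)  with Delta^(l) of
   bidegree (l, l). *)
Definition DeltaL (d : nat) (P : {mpoly CC[d + d]}) (l : nat)
  : {mpoly CC[d + d]} :=
  (-1) ^+ l *: bicomp P l l.

(* The standing setup of the paper for a classical Cartan domain of rank r in
   C^d: K (the isotropy group of 0 in the identity component of Aut(Omega))
   is a group of linear maps of C^d; e_1..e_r is a Jordan frame giving polar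
   decompositions with uniquely determined singular numbers; P represents the
   Jordan triple determinant Delta(z,w), a K-invariant sesqui-analytic
   polynomial with Delta(z,z) = prod_j (1 - t_j^2), which decomposes as
   \sum_{l=0}^r (-1)^l Delta^(l) with Delta^(l) of bidegree (l,l). *)
Record cartan_setup (d r : nat) (K : pred 'M[CC]_d) (e : 'I_r -> 'rV[CC]_d)
    (P : {mpoly CC[d + d]}) : Prop := CartanSetup {
  K_one : (1%:M : 'M[CC]_d) \in K;
  K_mul : forall k1 k2, k1 \in K -> k2 \in K -> k1 *m k2 \in K;
  K_inv : forall k, k \in K -> (k \in unitmx) /\ (invmx k \in K);
  polar_exists : forall z : 'rV[CC]_d, exists t, polar K e z t;
  polar_unique : forall z t t', polar K e z t -> polar K e z t' -> t = t';
  Delta_invariant : forall k z w, k \in K ->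
      sesq_eval P (z *m k) (w *m k) = sesq_eval P z w;
  Delta_diag : forall z t, polar K e z t ->
      sesq_eval P z z = \prod_(j < r) ((1 - t j ^+ 2)%:C : CC);
  Delta_bideg : forall m, m \in msupp P -> degz m = degw m /\ (degz m <= r)%N
}.

Definition shilov (d r : nat) (K : pred 'M[CC]_d) (e : 'I_r -> 'rV[CC]_d)
    (z : 'rV[CC]_d) : Prop :=
  exists2 k, k \in K & z = (\sum_(j < r) e j) *m k.

From HB Require Import structures.
From mathcomp Require Import all_boot all_order all_algebra.
From mathcomp Require Import Rstruct complex mpoly.
Import GRing.Theory Num.Theory.
Set Implicit Arguments.
Unset Strict Implicit.
Local Open Scope ring_scope.
Local Open Scope complex_scope.

(* Scaling z by a real c >= 0 multiplies the bidegree-(l,l) part of Delta by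
   c^(2l) and the singular numbers of z by c, so comparing
   Delta(cz, cz) = \prod_j (1 - c^2 t_j^2) for infinitely many c yields the
   polynomial identity  \sum_l Delta^(l)(z,z) X^l = \prod_j (1 + t_j^2 X).
   The conditions Delta^(l)(z,z) = C(r,l) say that this polynomial is
   (1 + X)^r, i.e. that all singular numbers of z are 1, i.e. z = k . e. *)

Lemma poly_eq_on_injective (R : idomainType) (f : nat -> R) (p q : {poly R}) :
  injective f -> (forall n, p.[f n] = q.[f n]) -> p = q.
Proof.
move=> f_inj pq; apply/eqP; rewrite -subr_eq0; apply/eqP.
apply: (@roots_geq_poly_eq0 _ _ [seq f n | n <- iota 0 (size (p - q))]).
- by apply/allP => _ /mapP[n _ ->]; rewrite /root hornerD hornerN pq subrr.
- by rewrite map_inj_uniq ?iota_uniq.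
- by rewrite size_map size_iota.
Qed.

Lemma binomial_1addX (R : comNzRingType) (r : nat) :
  (1 + 'X : {poly R}) ^+ r = \poly_(l < r.+1) ('C(r, l))%:R.
Proof.
rewrite addrC exprD1n poly_def; apply: eq_bigr => l _.
by rewrite scaler_nat.
Qed.

Lemma prod_1addZX_eq_1addX_pow (F : numFieldType) (r : nat) (a : 'I_r -> F) :
  \prod_(j < r) (1 + a j *: 'X) = (1 + 'X) ^+ r -> forall j, a j = 1.
Proof.
move=> E j.
(* Reverse the polynomials: evaluate at [y^-1] and multiply by [y ^+ r]. *)
have revE : \prod_(i < r) ('X + (a i)%:P) = ('X + 1) ^+ r.
  apply: (@poly_eq_on_injective _ (fun n => n.+1%:R)) => [m n /eqP|n].
    by rewrite eqr_nat eqSS => /eqP.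
  set y : F := n.+1%:R; have y0 : y != 0 by rewrite pnatr_eq0.
  have yD b : y + b = y * (1 + b * y^-1).
    by rewrite mulrDr mulr1 mulrCA mulfV ?mulr1.
  have Ey : \prod_(i < r) (1 + a i * y^-1) = (1 + y^-1) ^+ r.
    move/(congr1 (horner^~ y^-1)): E; rewrite horner_prod !hornerE => <-.
    by apply: eq_bigr => i _; rewrite !hornerE.
  rewrite horner_prod; under eq_bigr do rewrite !hornerE yD.
  rewrite big_split prodr_const card_ord /= Ey -exprMn.
  by rewrite !hornerE (yD 1) mul1r.
have /(congr1 (horner^~ (- a j))) := revE.
rewrite horner_prod (bigD1 j) //= !hornerE addNr mul0r.
by move=> /esym/eqP; rewrite expf_eq0 addrC subr_eq0 => /andP[_ /eqP <-].
Qed.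

Lemma meval_scale (R : comNzRingType) (n : nat) (c : R) (v : 'I_n -> R)
    (p : {mpoly R[n]}) :
  p.@[fun i => c * v i] =
  \sum_(m <- msupp p) c ^+ mdeg m * (p@_m * \prod_i v i ^+ m i).
Proof.
rewrite mevalE; apply: eq_bigr => m _.
rewrite mulrCA; under eq_bigr do rewrite exprMn.
by rewrite big_split prodrXr mdegE.
Qed.

Lemma conj_real_complex (x : Re_t) : Num.conj (x%:C : CC) = x%:C.
Proof. by apply/eqP; rewrite eq_complex /= oppr0 !eqxx. Qed.

Section SesquiAnalytic.

Variable d : nat.
Implicit Types (P : {mpoly CC[d + d]}) (z w : 'rV[CC]_d).

Definition sesq_var z w (i : 'I_(d + d)) : CC :=
  match split i with inl a => z 0 a | inr b => (w 0 b)^* end.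

Lemma sesq_evalE P z w : sesq_eval P z w = P.@[sesq_var z w].
Proof. by []. Qed.

Lemma sesq_var_scale (c : Re_t) z w i :
  sesq_var (c%:C *: z) (c%:C *: w) i = c%:C * sesq_var z w i.
Proof.
rewrite /sesq_var; case: split => a; rewrite mxE //.
by rewrite rmorphM /= conj_real_complex.
Qed.

Lemma mdeg_degz_degw (m : 'X_{1.. d + d}) : mdeg m = (degz m + degw m)%N.
Proof. by rewrite mdegE big_split_ord. Qed.

Lemma sesq_eval_bicomp P a b z w :
  sesq_eval (bicomp P a b) z w =
  \sum_(m <- msupp P | (degz m == a) && (degw m == b))
     P@_m * \prod_i sesq_var z w i ^+ m i.
Proof.
rewrite sesq_evalE /bicomp raddf_sum; apply: eq_bigr => m _.
by etransitivity; [exact: mevalZ | rewrite mevalX].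
Qed.

Lemma sesq_eval_DeltaL P l z w :
  sesq_eval (DeltaL P l) z w = (-1) ^+ l * sesq_eval (bicomp P l l) z w.
Proof. exact: mevalZ. Qed.

Lemma sesq_eval_scale (r : nat) P (c : Re_t) z w :
  (forall m, m \in msupp P -> degz m = degw m /\ (degz m <= r)%N) ->
  sesq_eval P (c%:C *: z) (c%:C *: w) =
  \sum_(l < r.+1) c%:C ^+ (l + l) * sesq_eval (bicomp P l l) z w.
Proof.
move=> P_bideg.
rewrite sesq_evalE (meval_eq _ (sesq_var_scale c z w)) meval_scale.
under [RHS]eq_bigr => l _ do rewrite sesq_eval_bicomp big_distrr big_mkcond /=.
rewrite exchange_big /= big_seq [RHS]big_seq; apply: eq_bigr => m mP.
have [zw zr] := P_bideg m mP.
rewrite (bigD1 (inord (degz m))) //= [X in _ + X]big1; last first.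
  move=> l lm; rewrite (negbTE (_ : degz m != l)) //.
  by apply: contra lm => /eqP ->; rewrite inord_val.
by rewrite inordK ?ltnS // mdeg_degz_degw -zw eqxx addr0.
Qed.

End SesquiAnalytic.

Section CartanDomain.

Variables (d r : nat) (K : pred 'M[CC]_d) (e : 'I_r -> 'rV[CC]_d).

Lemma frame_point1 : frame_point e (fun => 1) = \sum_(j < r) e j.
Proof. by apply: eq_bigr => j _; rewrite rmorph1 scale1r. Qed.

Lemma polar_scale z t (c : Re_t) :
  0 <= c -> polar K e z t -> polar K e (c%:C *: z) (fun j => c * t j).
Proof.
move=> c0 [[t0 t_dec] [k kK ->]]; split.
  split=> [i | i j ij]; first exact: mulr_ge0.
  by apply: ler_wpM2l; last apply: t_dec.
exists k => //; rewrite scalemxAl; congr (_ *m _).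
rewrite /frame_point scaler_sumr; apply: eq_bigr => j _.
by rewrite scalerA rmorphM.
Qed.

Variable P : {mpoly CC[d + d]}.
Hypothesis cs : cartan_setup K e P.

Definition DeltaL_poly (z : 'rV[CC]_d) : {poly CC} :=
  \poly_(l < r.+1) sesq_eval (DeltaL P l) z z.

Lemma DeltaL_polyE z t :
  polar K e z t -> DeltaL_poly z = \prod_(j < r) (1 + (t j ^+ 2)%:C *: 'X).
Proof.
move=> tz; apply: (@poly_eq_on_injective _ (fun n => - n%:R)) => [m n /eqP|n].
  by rewrite eqr_opp eqr_nat => /eqP.
pose c := Num.sqrt (n%:R : Re_t).
have c2 : (c%:C : CC) ^+ 2 = n%:R.
  by rewrite -rmorphXn sqr_sqrtr ?ler0n // rmorph_nat.
(* At X = -n = -c^2 both sides equal Delta(cz, cz). *)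
rewrite horner_poly horner_prod.
transitivity (sesq_eval P (c%:C *: z) (c%:C *: z)).
  rewrite (sesq_eval_scale _ _ _ (Delta_bideg cs)); apply: eq_bigr => l _.
  rewrite sesq_eval_DeltaL -[- (n%:R : CC)]mulN1r exprMn mulrCA -mulrA signrMK.
  by rewrite addnn -mul2n exprM c2 mulrC.
rewrite (Delta_diag cs (polar_scale (sqrtr_ge0 _) tz)); apply: eq_bigr => j _.
rewrite !hornerE rmorphB rmorph1 rmorphXn rmorphM exprMn c2 -rmorphXn.
by rewrite mulrN mulrC.
Qed.

Lemma shilov_polarE z t : polar K e z t -> shilov K e z <-> forall j, t j = 1.
Proof.
move=> tz; split=> [[k kK zk] | t1].
  have t1 : polar K e z (fun => 1).
    by split; [split=> *; rewrite ?ler01 | exists k; rewrite // frame_point1].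
  by rewrite (polar_unique cs tz t1).
case: tz => _ [k kK ->]; exists k => //.
by rewrite -frame_point1; congr (_ *m _); apply: eq_bigr => j _; rewrite t1.
Qed.

Lemma DeltaL_binomialE z t :
  polar K e z t ->
  (forall l, (1 <= l <= r)%N -> sesq_eval (DeltaL P l) z z = ('C(r, l))%:R) <->
  forall j, t j = 1.
Proof.
move=> tz; have Dz := DeltaL_polyE tz.
have binE : DeltaL_poly z = (1 + 'X) ^+ r <-> forall j, t j = 1.
  rewrite Dz; split=> [/prod_1addZX_eq_1addX_pow t1 j | t1].
    move: (t1 j); rewrite -(rmorph1 (real_complex Re_t)) => /complexI/eqP.
    by rewrite sqrp_eq1 ?(tz.1.1 j) // => /eqP.
  under eq_bigr do rewrite t1 expr1n rmorph1 scale1r.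
  by rewrite prodr_const card_ord.
rewrite -binE binomial_1addX.
split=> [DeltaL_binom | /polyP DeltaL_binom l /andP[_ lr]].
  apply: eq_poly => -[_ | l lr]; last exact: DeltaL_binom.
  move/(congr1 (horner^~ 0)): Dz.
  rewrite horner_coef0 /DeltaL_poly coef_poly /= => ->.
  by rewrite horner_prod bin0 big1 // => j _; rewrite !hornerE.
by move: (DeltaL_binom l); rewrite !coef_poly ltnS lr.
Qed.

End CartanDomain.

Theorem lemma2p1 (d r : nat) (K : pred 'M[CC]_d) (e : 'I_r -> 'rV[CC]_d)
    (P : {mpoly CC[d + d]}) :
  cartan_setup K e P ->
  forall z : 'rV[CC]_d,
    shilov K e z <->
    (forall l : nat, (1 <= l <= r)%N ->
       sesq_eval (DeltaL P l) z z = ('C(r, l))%:R).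
Proof.
move=> cs z; have [t tz] := polar_exists cs z.
by rewrite (shilov_polarE cs tz) (DeltaL_binomialE cs tz).
Qed.
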